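(* Let $\mathcal{X}=\{x^{(1)},\dots,x^{(L)}\}\subset\mathbb{C}$ with $L$ distinct symbols. If a constant composition $(n,M,\mathcal{X})$-code $\mathscr{C}$ with $P_{\mathscr{C}}(x^{(\ell)})>0$ for all $\ell$ is an $(n,M,\mathcal{X},\epsilon,B,\delta)$-code for the complex AWGN channel below, then \[ R(\mathscr{C})\le H(P_{\mathscr{C}})+\frac{1}{n^2}\left(\frac{1}{12}-\sum_{\ell=1}^L\frac{1}{12P_{\mathscr{C}}(x^{(\ell)})+1}\right)+\frac1n\left(\log_2\sqrt{2\pi}-\sum_{\ell=1}^L\log_2\sqrt{2\pi P_{\mathscr{C}}(x^{(\ell)})}\right)-\frac{\log_2 n}{n}\cdot\frac{L-1}{2}, \] where $H(P_{\mathscr{C}})=-\sum_{\ell=1}^L P_{\mathscr{C}}(x^{(\ell)})\log_2 P_{\mathscr{C}}(x^{(\ell)})$.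
   Context: Channel: $f_{\boldsymbol{Y}|\boldsymbol{X}}(\boldsymbol{y}|\boldsymbol{\nu})=\prod_{m=1}^n \frac{1}{\pi\sigma^2}\exp(-|y_m-\nu_m|^2/\sigma^2)$. An $(n,M,\mathcal{X})$-code is $\{(\boldsymbol{u}(i),\mathcal{D}_i)\}_{i=1}^M$ with $\boldsymbol{u}(i)\in\mathcal{X}^n$ and pairwise disjoint $\mathcal{D}_i\subseteq\mathbb{C}^n$; $R(\mathscr{C})=\frac{\log_2 M}{n}$; $\gamma(\mathscr{C})=\frac1M\sum_i\big(1-\int_{\mathcal{D}_i}f_{\boldsymbol{Y}|\boldsymbol{X}}(\boldsymbol{y}|\boldsymbol{u}(i))\mathrm{d}\boldsymbol{y}\big)$; $e_i=k_1\sum_m|u_m(i)|^2+k_2\sum_m|u_m(i)|^4$ with positive constants $k_1,k_2$; $\theta(\mathscr{C},B)=\frac1M\sum_i\mathbb{1}_{\{e_i<B\}}$; $(n,M,\mathcal{X},\epsilon,B,\delta)$-code means $\gamma(\mathscr{C})\le\epsilon$ and $\theta(\mathscr{C},B)\le\delta$. Types: $P_{\boldsymbol{u}(i)}(x)=\frac1n\sum_{m}\mathbb{1}_{\{u_m(i)=x\}}$, $P_{\mathscr{C}}=\frac1M\sum_iP_{\boldsymbol{u}(i)}$; constant composition means $P_{\boldsymbol{u}(i)}=P_{\mathscr{C}}$ for all $i$. *)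

From HB Require Import structures.
From mathcomp Require Import all_boot all_order all_algebra.
From mathcomp Require Import all_classical all_reals all_analysis.
Set Implicit Arguments. Unset Strict Implicit. Unset Printing Implicit Defensive.
Import Order.TTheory GRing.Theory Num.Theory.
Import numFieldNormedType.Exports.
Local Open Scope classical_set_scope.
Local Open Scope ring_scope.

Section AWGN.
Variable R : realType.

(* Complex numbers are represented as pairs (real part, imaginary part) in R * R,
   so that C^n = n.-tuple (R * R) carries the product (Borel) sigma-algebra
   and C carries Lebesgue measure on R^2. *)
Definition cplx := (R * R)%type.

Definition csqdist (z w : cplx) : R := (z.1 - w.1) ^+ 2 + (z.2 - w.2) ^+ 2.
Definition csqnorm (z : cplx) : R := z.1 ^+ 2 + z.2 ^+ 2.

Definition log2 (x : R) : R := ln x / ln 2.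

Definition leb2 := (@lebesgue_measure R \x @lebesgue_measure R)%E.

(* Integral over C^n = C x ... x C, taken coordinate by coordinate
   (iterated Lebesgue integral; by Tonelli it is the Lebesgue integral on C^n
   for nonnegative measurable integrands). *)
Fixpoint iterint (n : nat) : (n.-tuple cplx -> \bar R) -> \bar R :=
  match n return (n.-tuple cplx -> \bar R) -> \bar R with
  | 0 => fun g => g [tuple]
  | k.+1 => fun g => (\int[leb2]_z iterint (fun t => g (cons_tuple z t)))%E
  end.

Definition awgn_density (n : nat) (sigma : R) (y nu : n.-tuple cplx) : R :=
  \prod_(m < n) ((pi * sigma ^+ 2)^-1 *
                  expR (- csqdist (tnth y m) (tnth nu m) / sigma ^+ 2)).

Definition chan_prob (n : nat) (sigma : R) (D : set (n.-tuple cplx))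
    (nu : n.-tuple cplx) : R :=
  fine (iterint (fun y => ((\1_D y : R) * awgn_density sigma y nu)%:E)).

Definition is_code (L n M : nat) (x : 'I_L -> cplx)
    (u : 'I_M -> n.-tuple cplx) (D : 'I_M -> set (n.-tuple cplx)) : Prop :=
  [/\ forall i (m : 'I_n), exists l, tnth (u i) m = x l,
      injective u,
      forall i, measurable (D i) &
      forall i j, i != j -> D i `&` D j = set0].

Definition rate (n M : nat) : R := log2 M%:R / n%:R.

Definition avg_error (n M : nat) (sigma : R) (u : 'I_M -> n.-tuple cplx)
    (D : 'I_M -> set (n.-tuple cplx)) : R :=
  M%:R^-1 * \sum_(i < M) (1 - chan_prob sigma (D i) (u i)).

Definition energy (n : nat) (k1 k2 : R) (c : n.-tuple cplx) : R :=
  k1 * \sum_(m < n) csqnorm (tnth c m) + k2 * \sum_(m < n) (csqnorm (tnth c m)) ^+ 2.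

Definition energy_outage (n M : nat) (k1 k2 B : R) (u : 'I_M -> n.-tuple cplx) : R :=
  M%:R^-1 * \sum_(i < M) (if energy k1 k2 (u i) < B then 1 else 0).

Definition is_eBd_code (n M : nat) (sigma k1 k2 eps B delta : R)
    (u : 'I_M -> n.-tuple cplx) (D : 'I_M -> set (n.-tuple cplx)) : Prop :=
  avg_error sigma u D <= eps /\ energy_outage k1 k2 B u <= delta.

Definition type_of (n : nat) (c : n.-tuple cplx) (a : cplx) : R :=
  (count (pred1 a) c)%:R / n%:R.

Definition code_type (n M : nat) (u : 'I_M -> n.-tuple cplx) (a : cplx) : R :=
  M%:R^-1 * \sum_(i < M) type_of (u i) a.

Definition constant_composition (n M : nat) (u : 'I_M -> n.-tuple cplx) : Prop :=
  forall i a, type_of (u i) a = code_type u a.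

Definition entropy2 (L : nat) (x : 'I_L -> cplx) (P : cplx -> R) : R :=
  - \sum_(l < L) P (x l) * log2 (P (x l)).

End AWGN.

(* The codewords of a constant composition
   code are distinct rearrangements of a single word in which x^(l) occurs
   k_l = n P(x^(l)) times, so M <= n! / prod_l k_l!.  Write
   ln j! = (j + 1/2) ln j - j + r_j.  Robbins' bounds give
   r_j >= ln sqrt(2 pi) + 1/(12 j + 1), and r_j - r_n >= 1/(12 j + 1) - 1/(12 n + 1)
   for j <= n; they turn ln (n! / prod_l k_l!) into the entropy, the ln n and
   ln sqrt(2 pi) terms and the correction 1/(12 n + 1) - sum_l 1/(12 k_l + 1),
   which is at most ln 2 (1/(12 n) - sum_l 1/(12 k_l + n)), the second-order
   term of the claim.  The constant ln sqrt(2 pi) comes from Wallis' inequality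
   pi m binomial(2m, m)^2 <= 16^m, proved with the integrals of cos^n over
   [0, pi/2]. *)

From HB Require Import structures.
From mathcomp Require Import all_boot all_order all_algebra.
From mathcomp Require Import all_classical all_reals all_analysis.
From mathcomp Require Import ring lra.
Import Order.TTheory GRing.Theory Num.Theory.

(** * Rearrangements of a sequence *)

Lemma sum_count_mem {T : eqType} {xs s : seq T} : uniq xs -> all (mem xs) s ->
  \sum_(a <- xs) count_mem a s = size s.
Proof.
move=> uxs; elim: s => [|y s IH] /=; first by rewrite big1_seq.
case/andP=> yx /IH{IH}; rewrite big_split /= => ->.
suff -> : \sum_(a <- xs) (y == a) = count_mem y xs by rewrite count_uniq_mem ?yx.
rewrite -sum1_count [RHS]big_mkcond; apply: eq_bigr => a _.
by rewrite /= eq_sym; case: (a == y).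
Qed.

Section Rearrangements.
Variable T : eqType.
Implicit Types (a : T) (xs s : seq T).

Lemma prod_fact_count_mem_rem {xs s a} : uniq xs -> a \in xs -> a \in s ->
  \prod_(b <- xs) (count_mem b s)`! =
  count_mem a s * \prod_(b <- xs) (count_mem b (rem a s))`!.
Proof.
move=> uxs ax as_; rewrite !(bigD1_seq a) //= count_mem_rem eqxx mulnA.
have /prednK <- : 0 < count_mem a s by rewrite -has_count has_pred1.
rewrite subn1 /= -factS; congr (_ * _); apply: eq_bigr => b /negbTE ba.
by rewrite count_mem_rem eq_sym ba subn0.
Qed.

Lemma uniq_perm_eq_size_le xs s0 (ss : seq (seq T)) :
  uniq xs -> all (mem xs) s0 -> uniq ss -> all (perm_eq s0) ss ->
  size ss * \prod_(a <- xs) (count_mem a s0)`! <= (size s0)`!.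
Proof.
move=> uxs; move sz_s0: (size s0) => n; elim: n s0 ss sz_s0 => [|n IH] s0 ss.
  move/eqP; rewrite size_eq0 => /eqP -> _ uss /allP pss.
  rewrite big1 ?muln1 // (@uniq_leq_size _ ss [:: [::]]) // => s /pss.
  by rewrite perm_sym => /perm_nilP ->; rewrite mem_seq1.
move=> sz_s0 s0xs uss /allP pss.
pose ss_ a := [seq behead s | s <- ss & ohead s == Some a].
have size_ss : size ss = \sum_(a <- xs) size (ss_ a).
  have uSxs : uniq (map Some xs) by rewrite (map_inj_uniq (@Some_inj _)).
  rewrite -(size_map ohead) -(sum_count_mem uSxs); last first.
    apply/allP => _ /mapP[s /pss s0s ->]; have := perm_size s0s.
    rewrite sz_s0; case: s s0s => // y s /perm_mem/(_ y); rewrite mem_head => ys0 _.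
    by rewrite /= map_f //; apply: (allP s0xs).
  by rewrite big_map; apply: eq_bigr => a _; rewrite size_map size_filter count_map.
rewrite size_ss big_distrl /= factS -sz_s0 -(sum_count_mem uxs s0xs) big_distrl /=.
rewrite big_seq [X in _ <= X]big_seq; apply: leq_sum => a ax.
have [as0|as0] := boolP (a \in s0); last first.
  suff -> : ss_ a = [::] by [].
  apply/nilP; rewrite /nilp size_map size_filter -leqn0 leqNgt -has_count.
  apply/hasP => -[[|y s] //= /pss /perm_mem s0s /eqP[ya]].
  by move: as0; rewrite s0s ya mem_head.
rewrite (prod_fact_count_mem_rem uxs ax as0) mulnCA leq_mul2l; apply/orP; right.
apply: IH.
- by rewrite size_rem // sz_s0.
- by apply/allP => b /mem_rem /(allP s0xs).
- rewrite map_inj_in_uniq ?filter_uniq // => s t.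
  rewrite !mem_filter => /andP[+ _] /andP[+ _].
  by case: s => [|y s]; case: t => [|z t] //= /eqP[->] /eqP[->] ->.
- apply/allP => t /mapP[[|y s] + ->]; rewrite mem_filter //= => /andP[/eqP[->] /pss s0s].
  by rewrite -(perm_cons a) -(permPl (perm_to_rem as0)).
Qed.

End Rearrangements.

Local Open Scope ring_scope.

(** * Rational bounds on the logarithm *)

Section RealAnalysis.
Import numFieldNormedType.Exports.
Variable R : realType.
Implicit Types (f g : R -> R) (t a b : R).

(* The library's [is_derive] instances, stated for eta-expanded functions:
   instance resolution does not find them on such terms (and may loop). *)
Lemma is_deriveD_fun {f g t a b} : is_derive t 1 f a -> is_derive t 1 g b ->
  is_derive t 1 (fun y => f y + g y) (a + b).
Proof. exact: is_deriveD. Qed.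

Lemma is_deriveB_fun {f g t a b} : is_derive t 1 f a -> is_derive t 1 g b ->
  is_derive t 1 (fun y => f y - g y) (a - b).
Proof. exact: is_deriveB. Qed.

Lemma is_deriveM_fun {f g t a b} : is_derive t 1 f a -> is_derive t 1 g b ->
  is_derive t 1 (fun y => f y * g y) (f t * b + g t * a).
Proof. exact: is_deriveM. Qed.

Lemma is_deriveX_fun {f t a} n : is_derive t 1 f a ->
  is_derive t 1 (fun y => f y ^+ n) (n%:R * f t ^+ n.-1 * a).
Proof.
have -> : (fun y => f y ^+ n) = f ^+ n by apply/funext => y; rewrite exprfctE.
exact: is_deriveX.
Qed.

Lemma is_deriveV_fun {f t a} : is_derive t 1 f a -> f t != 0 ->
  is_derive t 1 (fun y => (f y)^-1) (- a / f t ^+ 2).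
Proof.
move=> fa ft0; apply: is_derive_eq (is_deriveV ft0 fa) _.
by rewrite -[_ *: _]/(_ * _) mulNr mulrC mulNr.
Qed.

Lemma is_derive_ge0_le f (df : R -> R) a b : a <= b ->
  (forall t, a <= t <= b -> is_derive t 1 f (df t)) ->
  (forall t, a < t < b -> 0 <= df t) -> f a <= f b.
Proof.
move=> ab fdf df_ge0; have ex_df t : a <= t <= b -> derivable f t 1.
  by move=> /fdf ft; exact: ex_derive.
apply: (@ger0_derive1_ndecr R f a b) => // [t|t|].
- by rewrite in_itv /= => /andP[a_t t_b]; apply: ex_df; rewrite !ltW.
- rewrite in_itv /= => /andP[a_t t_b]; have /fdf ft : a <= t <= b by rewrite !ltW.
  by rewrite derive1E derive_val df_ge0 // a_t.
- by apply: derivable_within_continuous => t; rewrite in_itv /=; apply: ex_df.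
Qed.

Lemma ln_ge_rational t : 1 <= t -> (3 * t ^+ 2 - 3) / (t ^+ 2 + 4 * t + 1) <= ln t.
Proof.
move=> t1; rewrite -subr_ge0.
pose f (y : R) := ln y - (3 * y ^+ 2 - 3) * (y ^+ 2 + 4 * y + 1)^-1.
have -> : 0 = f 1 by rewrite /f ln1 expr1n; field; lra.
apply: (@is_derive_ge0_le f
  (fun y => (y - 1) ^+ 4 / (y * (y ^+ 2 + 4 * y + 1) ^+ 2)) _ _ t1)
  => y /andP[y1 _]; have y0 : 0 < y by lra.
  have q0 : y ^+ 2 + 4 * y + 1 != 0 by apply/lt0r_neq0; nra.
  have dq := is_deriveD_fun (is_deriveD_fun (is_deriveX_fun 2 (is_derive_id y 1))
    (is_deriveM_fun (is_derive_cst (4 : R) y 1) (is_derive_id y 1)))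
    (is_derive_cst (1 : R) y 1).
  have dp := is_deriveB_fun (is_deriveM_fun (is_derive_cst (3 : R) y 1)
    (is_deriveX_fun 2 (is_derive_id y 1))) (is_derive_cst (3 : R) y 1).
  apply: is_derive_eq (is_deriveB_fun (is_derive1_ln y0)
    (is_deriveM_fun dp (is_deriveV_fun dq q0))) _.
  rewrite /=; field; lra.
apply: divr_ge0; first by apply: exprn_ge0; lra.
by rewrite mulr_ge0 ?sqr_ge0 // ltW.
Qed.

Lemma ln_le_rational t : 1 <= t ->
  ln t <= (t ^+ 3 + 9 * t ^+ 2 - 9 * t - 1) / (6 * (t ^+ 2 + t)).
Proof.
move=> t1; rewrite -subr_ge0.
pose f (y : R) := (y ^+ 3 + 9 * y ^+ 2 - 9 * y - 1) * (6 * (y ^+ 2 + y))^-1 - ln y.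
have -> : 0 = f 1 by rewrite /f ln1 !expr1n addrK subrr mul0r subr0.
apply: (@is_derive_ge0_le f (fun y => (y - 1) ^+ 4 / (6 * (y ^+ 2 + y) ^+ 2)) _ _ t1)
  => y /andP[y1 _]; have y0 : 0 < y by lra.
  have q0 : 6 * (y ^+ 2 + y) != 0.
    by rewrite lt0r_neq0 // mulr_gt0 // addr_gt0 // exprn_gt0.
  have dq := is_deriveM_fun (is_derive_cst (6 : R) y 1)
    (is_deriveD_fun (is_deriveX_fun 2 (is_derive_id y 1)) (is_derive_id y 1)).
  have dp := is_deriveB_fun (is_deriveB_fun (is_deriveD_fun
    (is_deriveX_fun 3 (is_derive_id y 1))
    (is_deriveM_fun (is_derive_cst (9 : R) y 1) (is_deriveX_fun 2 (is_derive_id y 1))))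
    (is_deriveM_fun (is_derive_cst (9 : R) y 1) (is_derive_id y 1)))
    (is_derive_cst (1 : R) y 1).
  apply: is_derive_eq (is_deriveB_fun (is_deriveM_fun dp (is_deriveV_fun dq q0))
    (is_derive1_ln y0)) _.
  by rewrite /=; field; rewrite !lt0r_neq0 ?addr_gt0 ?exprn_gt0.
apply: divr_ge0; first by apply: exprn_ge0; lra.
by rewrite mulr_ge0 ?sqr_ge0.
Qed.

Lemma ln_prod L (f : 'I_L -> R) : (forall l, 0 < f l) ->
  ln (\prod_(l < L) f l) = \sum_(l < L) ln (f l).
Proof.
move=> f_gt0.
suff [] : 0 < \prod_(l < L) f l /\ ln (\prod_(l < L) f l) = \sum_(l < L) ln (f l) by [].
apply: (big_rec2 (fun p s => 0 < p /\ ln p = s)); first by rewrite ln1 ltr01.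
by move=> l p s _ [p0 <-]; rewrite mulr_gt0 // lnM ?posrE.
Qed.

Lemma ln_sqrt (a : R) : 0 < a -> ln (Num.sqrt a) = ln a / 2.
Proof. by move=> a0; rewrite -powR12_sqrt ?ltW // ln_powR mulrC. Qed.

(** * Wallis' inequality *)

(* [cos_pow_prim n t] is the integral of [cos ^+ n] over [[0, t]], defined
   through the reduction formula. *)
Fixpoint cos_pow_prim (n : nat) (t : R) : R :=
  match n with
  | 0 => t
  | 1 => sin t
  | m.+2 => cos t ^+ m.+1 * sin t / m.+2%:R + m.+1%:R / m.+2%:R * cos_pow_prim m t
  end.

Local Notation W n := (cos_pow_prim n (pi / 2)).

Lemma is_derive_cos_pow_prim n t : is_derive t 1 (cos_pow_prim n) (cos t ^+ n).
Proof.
elim/ltn_ind: n => -[|[|n]] IH.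
- exact: is_derive_id.
- by apply: is_derive_eq (is_derive_sin t) _; rewrite expr1.
apply: is_derive_eq (is_deriveD_fun (is_deriveM_fun (is_deriveM_fun
  (is_deriveX_fun n.+1 (is_derive_cos t)) (is_derive_sin t))
  (is_derive_cst (n.+2%:R^-1 : R) t 1)) (is_deriveM_fun
  (is_derive_cst (n.+1%:R / n.+2%:R : R) t 1) (IH n (ltnW (ltnSn _))))) _.
have pythagoras : cos t ^+ 2 + sin t ^+ 2 - 1 = 0 by rewrite cos2Dsin2 subrr.
transitivity (cos t ^+ n.+2 - n.+1%:R / n.+2%:R * cos t ^+ n *
  (cos t ^+ 2 + sin t ^+ 2 - 1)); last by rewrite pythagoras mulr0 subr0.
rewrite /= -[n.+2%:R]natr1 -[n.+1%:R]natr1 !exprS.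
by field; rewrite lt0r_neq0 // ltr_wpDl.
Qed.

Lemma cos_pow_prim0 n : cos_pow_prim n 0 = 0.
Proof.
by elim/ltn_ind: n => -[|[|n]] IH //=; rewrite ?sin0 // IH // !(mulr0, mul0r) addr0.
Qed.

Lemma cos_pow_prim_pihalfSS n : W n.+2 = n.+1%:R / n.+2%:R * W n.
Proof. by rewrite /= cos_pihalf expr0n /= !mul0r add0r. Qed.

Lemma cos_pow_prim_pihalf_mul n : n.+1%:R * W n.+1 * W n = pi / 2.
Proof.
elim: n => [|n IH]; first by rewrite /= sin_pihalf !mul1r.
by rewrite cos_pow_prim_pihalfSS -[RHS]IH; field; rewrite lt0r_neq0 // ltr_pwDl.
Qed.

Lemma cos_pow_prim_pihalf_gt0 n : 0 < W n.
Proof.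
elim/ltn_ind: n => -[|[|n]] IH; first by rewrite /= divr_gt0 ?pi_gt0.
  by rewrite /= sin_pihalf.
by rewrite cos_pow_prim_pihalfSS mulr_gt0 ?divr_gt0 ?ltr0n ?IH.
Qed.

Lemma cos_pow_prim_pihalfS_le n : W n.+1 <= W n.
Proof.
suff : cos_pow_prim n 0 - cos_pow_prim n.+1 0 <= W n - W n.+1.
  by rewrite !cos_pow_prim0 subrr subr_ge0.
have pi2_ge0 : 0 <= pi / 2 :> R by rewrite divr_ge0 ?pi_ge0.
apply: (@is_derive_ge0_le (fun t => cos_pow_prim n t - cos_pow_prim n.+1 t)
  (fun t => cos t ^+ n - cos t ^+ n.+1) _ _ pi2_ge0) => [t _|t /andP[t0 t1]].
  exact: is_deriveB_fun (is_derive_cos_pow_prim n t) (is_derive_cos_pow_prim n.+1 t).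
have c0 : 0 <= cos t by apply: cos_ge0_pihalf; have := pi_gt0 R; lra.
by rewrite exprS -{1}[cos t ^+ n]mul1r -mulrBl mulr_ge0 ?exprn_ge0 ?subr_ge0 ?cos_le1.
Qed.

Lemma cos_pow_prim_pihalf_double m :
  W m.*2 = pi / 2 * ((m.*2)`!%:R / (4 ^+ m * m`!%:R ^+ 2)).
Proof.
elim: m => [|m IH]; first by rewrite /= fact0 expr0 mul1r expr1n invr1 !mulr1.
rewrite doubleS cos_pow_prim_pihalfSS IH !factS !natrM (exprS 4) -!natr1 -muln2 natrM.
have m_fact0 : m`!%:R != 0 :> R by rewrite pnatr_eq0 -lt0n fact_gt0.
by field; rewrite m_fact0 expf_neq0 //= !lt0r_neq0 ?ltr_wpDl ?mulr_ge0.
Qed.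

Lemma wallis_le m : pi * m%:R * ((m.*2)`!%:R / (4 ^+ m * m`!%:R ^+ 2)) ^+ 2 <= 1 :> R.
Proof.
case: m => [|m]; first by rewrite mulr0 mul0r ler01.
have := cos_pow_prim_pihalf_mul m.*2.+1.
have := cos_pow_prim_pihalfS_le m.*2.+1; have := cos_pow_prim_pihalf_gt0 m.*2.+2.
have := cos_pow_prim_pihalf_double m.+1; rewrite doubleS.
set c := (_ / _); move=> Wc w_gt0 w_le w_mul.
have : m.*2.+2%:R * W m.*2.+2 ^+ 2 <= pi / 2.
  by rewrite -[X in _ <= X]w_mul expr2 mulrA ler_pM2l ?mulr_gt0 ?ltr0n.
rewrite Wc.
have -> : m.*2.+2%:R = 2 * m.+1%:R :> R by rewrite -doubleS -muln2 natrM mulrC.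
move=> h; rewrite -(ler_pM2l (pi_gt0 R)) mulr1.
have -> : pi * (pi * m.+1%:R * c ^+ 2) = 2 * (2 * m.+1%:R * (pi / 2 * c) ^+ 2) by field.
lra.
Qed.

(** * Robbins' bounds on Stirling's remainder *)

Lemma telescope_le (f g : nat -> R) k d :
  (forall j, (k <= j)%N -> f j - f j.+1 <= g j - g j.+1) ->
  f k - f (k + d)%N <= g k - g (k + d)%N.
Proof.
move=> fg; elim: d => [|d IH]; first by rewrite addn0 !subrr.
by rewrite addnS; have := fg (k + d) (leq_addr _ _); lra.
Qed.

Definition stirling_rem (k : nat) : R :=
  ln k`!%:R - (k%:R + 2^-1) * ln k%:R + k%:R.

Lemma stirling_rem_subS k : (0 < k)%N ->
  stirling_rem k - stirling_rem k.+1 = (k%:R + 2^-1) * ln (k.+1%:R / k%:R) - 1.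
Proof.
move=> k0; rewrite /stirling_rem factS natrM.
rewrite !lnM ?lnV ?posrE ?invr_gt0 ?ltr0n ?fact_gt0 //.
by rewrite -natr1; ring.
Qed.

Lemma stirling_rem_subS_le k : (0 < k)%N ->
  stirling_rem k - stirling_rem k.+1 <= (12 * k%:R)^-1 - (12 * k.+1%:R)^-1.
Proof.
move=> k0; rewrite stirling_rem_subS // -[k.+1%:R]natr1.
have : 1 <= k%:R :> R by rewrite ler1n.
move: (k%:R : R) => K K1; have y1 : 1 <= (K + 1) / K by rewrite ler_pdivlMr; lra.
set t := (K + 1) / K.
have <- : (K + 2^-1) * ((t ^+ 3 + 9 * t ^+ 2 - 9 * t - 1) / (6 * (t ^+ 2 + t))) - 1
    = (12 * K)^-1 - (12 * (K + 1))^-1.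
  by rewrite /t; field; rewrite !lt0r_neq0 //; nra.
by rewrite lerD2r ler_wpM2l ?ln_le_rational //; lra.
Qed.

Lemma stirling_rem_subS_ge k : (0 < k)%N ->
  (12 * k%:R + 1)^-1 - (12 * k.+1%:R + 1)^-1 <= stirling_rem k - stirling_rem k.+1.
Proof.
move=> k0; rewrite stirling_rem_subS // -[k.+1%:R]natr1.
have : 1 <= k%:R :> R by rewrite ler1n.
move: (k%:R : R) => K K1; have y1 : 1 <= (K + 1) / K by rewrite ler_pdivlMr; lra.
set t := (K + 1) / K.
have t_le : (K + 2^-1) * ((3 * t ^+ 2 - 3) / (t ^+ 2 + 4 * t + 1)) - 1
    <= (K + 2^-1) * ln t - 1 by rewrite lerD2r ler_wpM2l ?ln_ge_rational //; lra.
apply: le_trans t_le; have -> : (K + 2^-1) * ((3 * t ^+ 2 - 3) / (t ^+ 2 + 4 * t + 1)) - 1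
    = (12 * K ^+ 2 + 12 * K + 2)^-1 by rewrite /t; field; rewrite !lt0r_neq0 //; nra.
have -> : (12 * K + 1)^-1 - (12 * (K + 1) + 1)^-1 = 12 / ((12 * K + 1) * (12 * K + 13)).
  by field; rewrite !lt0r_neq0 //; nra.
have D0 : 0 < (12 * K + 1) * (12 * K + 13) by apply: mulr_gt0; lra.
have E0 : 0 < 12 * K ^+ 2 + 12 * K + 2 by nra.
by rewrite ler_pdivrMr // mulrC ler_pdivlMr //; nra.
Qed.

Lemma stirling_rem_sub_le {k m} : (0 < k)%N -> (k <= m)%N ->
  stirling_rem k - stirling_rem m <= (12 * k%:R)^-1 - (12 * m%:R)^-1.
Proof.
move=> k0 /subnKC <-.
apply: (telescope_le stirling_rem (fun j => (12 * j%:R)^-1)) => j kj.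
exact: stirling_rem_subS_le (leq_trans k0 kj).
Qed.

Lemma stirling_rem_sub_ge {k m} : (0 < k)%N -> (k <= m)%N ->
  (12 * k%:R + 1)^-1 - (12 * m%:R + 1)^-1 <= stirling_rem k - stirling_rem m.
Proof.
move=> k0 /subnKC <-.
apply: (telescope_le (fun j => (12 * j%:R + 1)^-1) stirling_rem) => j kj.
exact: stirling_rem_subS_ge (leq_trans k0 kj).
Qed.

Lemma stirling_rem_double_ge m : (0 < m)%N ->
  ln (2 * pi) / 2 <= 2 * stirling_rem m - stirling_rem m.*2.
Proof.
move=> m0; have := wallis_le m; set c := _ / _.
have pi0 := pi_gt0 R; have m_gt0 : (0 : R) < m%:R by rewrite ltr0n.
have fact_gt0 j : (0 : R) < j`!%:R by rewrite ltr0n fact_gt0.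
have c_gt0 : 0 < c by rewrite divr_gt0 ?mulr_gt0 ?exprn_gt0.
have ln4 : ln (4 : R) = 2 * ln 2 by rewrite mulr_natl -lnXn // expr2 -natrM.
have lnc : ln c = ln (m.*2)`!%:R - m%:R * ln 4 - 2 * ln m`!%:R.
  rewrite lnM ?lnV ?posrE ?invr_gt0 ?mulr_gt0 ?exprn_gt0 // lnM ?posrE ?exprn_gt0 //.
  by rewrite !lnXn // -[_ *+ m]mulr_natl -[_ *+ 2]mulr_natl; ring.
have m2 : (m.*2)%:R = 2 * m%:R :> R by rewrite -muln2 natrM mulrC.
clearbody c; move/ln_le0; rewrite !lnM ?lnXn ?posrE ?mulr_gt0 ?exprn_gt0 //.
rewrite -[_ *+ 2]mulr_natl lnc ln4 /stirling_rem m2 !lnM ?posrE // ln1 !mulr1.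
move: (ln m`!%:R) (ln (m.*2)`!%:R) (ln (m%:R : R)) (ln (2 : R)) (ln pi) => F F2 lm l2 lp.
lra.
Qed.

Lemma stirling_rem_ge m : (0 < m)%N -> ln (2 * pi) / 2 - (24 * m%:R)^-1 <= stirling_rem m.
Proof.
move=> m0; have := stirling_rem_sub_le m0 (leq_addr m m).
rewrite addnn -muln2 natrM (_ : (12 * m%:R)^-1 - (12 * (m%:R * 2%:R))^-1 = (24 * m%:R)^-1).
  by have := stirling_rem_double_ge m m0; rewrite -muln2; lra.
by field; rewrite pnatr_eq0 -lt0n.
Qed.

Lemma stirling_rem_ge_robbins k : (0 < k)%N ->
  ln (2 * pi) / 2 + (12 * k%:R + 1)^-1 <= stirling_rem k.
Proof.
move=> k0; have up_to_invn m : (k <= m)%N ->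
    ln (2 * pi) / 2 + (12 * k%:R + 1)^-1 <= stirling_rem k + m%:R^-1.
  move=> km; have m0 : (0 < m)%N := leq_trans k0 km.
  have := stirling_rem_sub_ge k0 km; have := stirling_rem_ge m m0.
  have m_ge1 : 1 <= m%:R :> R by rewrite ler1n.
  have : (24 * m%:R)^-1 + (12 * m%:R + 1)^-1 <= m%:R^-1 :> R.
    rewrite -[leRHS]mulr1 (_ : (24 * m%:R)^-1 = m%:R^-1 / 24); last by field; lra.
    have : (12 * m%:R + 1)^-1 <= m%:R^-1 / 12 :> R.
      by rewrite -invfM lef_pV2 ?posrE; lra.
    have : 0 <= m%:R^-1 :> R by rewrite invr_ge0; lra.
    lra.
  lra.
apply/ler_addgt0Pr => e e0.
have [m km me] : exists2 m, (k <= m)%N & m%:R^-1 <= e.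
  exists (k + Num.bound e^-1)%N; first exact: leq_addr.
  have eb : e^-1 < (Num.bound e^-1)%:R by rewrite archi_boundP // invr_ge0 ltW.
  rewrite invf_ple ?posrE ?ltr0n ?addn_gt0 ?k0 // natrD; have := ler0n R k; lra.
by apply: le_trans (up_to_invn m km) _; rewrite lerD2l.
Qed.

Lemma stirling_rem_multinomial_le {L n} {k : 'I_L -> nat} (l0 : 'I_L) :
  (forall l, 0 < k l)%N -> (k l0 <= n)%N ->
  stirling_rem n - \sum_(l < L) stirling_rem (k l) <=
  (1 - L%:R) * (ln (2 * pi) / 2) + (12 * n%:R + 1)^-1
  - \sum_(l < L) (12 * (k l)%:R + 1)^-1.
Proof.
move=> k_gt0 kn; set c := ln (2 * pi) / 2; pose g l : R := (12 * (k l)%:R + 1)^-1.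
have split_rem : \sum_(l < L) stirling_rem (k l) =
    stirling_rem (k l0) + \sum_(l < L | l != l0) stirling_rem (k l) by rewrite (bigD1 l0).
have split_g : \sum_(l < L) (c + g l) = c + g l0 + \sum_(l < L | l != l0) (c + g l).
  by rewrite (bigD1 l0).
rewrite big_split sumr_const card_ord -[c *+ _]mulr_natl /= in split_g.
have rest : \sum_(l < L | l != l0) (c + g l) <= \sum_(l < L | l != l0) stirling_rem (k l).
  by apply: ler_sum => l _; apply: stirling_rem_ge_robbins.
have := stirling_rem_sub_ge (k_gt0 l0) kn; rewrite -/(g l0); lra.
Qed.

(* [(12 K + 1)^-1 - ln 2 * (12 K + N)^-1] is nonnegative and nonincreasing
   for [0 < K <= N]; its value at [K = N] already exceeds the left-hand side. *)
Lemma robbins_correction_le L (N : R) (K : 'I_L -> R) (l0 : 'I_L) :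
  1 <= N -> (forall l, 0 < K l) -> K l0 <= N ->
  (12 * N + 1)^-1 - \sum_(l < L) (12 * K l + 1)^-1 <=
  ln 2 * ((12 * N)^-1 - \sum_(l < L) (12 * K l + N)^-1).
Proof.
move=> N1 K_gt0 KN.
have ln2_ge0 : 0 <= ln (2 : R) by rewrite ln_ge0 // ler1n.
have ln2_le1 : ln (2 : R) <= 1 by apply: (@le_ln1Dx R 1); lra.
pose h l := (12 * K l + 1)^-1 - ln 2 * (12 * K l + N)^-1.
have h_ge0 l : 0 <= h l.
  have := K_gt0 l => Kl_gt0.
  have : (12 * K l + N)^-1 <= (12 * K l + 1)^-1 by rewrite lef_pV2 ?posrE; lra.
  have : 0 <= (12 * K l + N)^-1 by rewrite invr_ge0; lra.
  rewrite /h; nra.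
have h_l0 : (12 * N + 1)^-1 - ln 2 * (12 * N)^-1 <= h l0.
  have := K_gt0 l0; rewrite /h; move: (K l0) KN => K' KN K_gt0'.
  have e1 : (12 * K' + N)^-1 - (13 * N)^-1 =
      12 * (N - K') / ((12 * K' + N) * (13 * N)).
    by field; apply/andP; split; apply: lt0r_neq0; lra.
  have e2 : (12 * K' + 1)^-1 - (12 * N + 1)^-1 =
      12 * (N - K') / ((12 * K' + 1) * (12 * N + 1)).
    by field; apply/andP; split; apply: lt0r_neq0; lra.
  have : 12 * (N - K') / ((12 * K' + N) * (13 * N)) <=
      12 * (N - K') / ((12 * K' + 1) * (12 * N + 1)).
    apply: ler_wpM2l; first lra.
    by rewrite lef_pV2 ?posrE ?mulr_gt0; nra.
  have : (13 * N)^-1 <= (12 * N)^-1 by rewrite lef_pV2 ?posrE; lra.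
  have : 0 <= 12 * (N - K') / ((12 * K' + N) * (13 * N)) by rewrite divr_ge0 ?mulr_ge0; lra.
  nra.
have : h l0 <= \sum_(l < L) h l.
  by rewrite (bigD1 l0) //= lerDl sumr_ge0.
rewrite sumrB -mulr_sumr; lra.
Qed.

Definition multinomial_ln_bound {L} n (k : 'I_L -> nat) : R :=
  - \sum_(l < L) (k l)%:R * ln ((k l)%:R / n%:R) + (1 - L%:R) * (ln (2 * pi) / 2)
  + (ln n%:R - \sum_(l < L) ln (k l)%:R) / 2
  + ln 2 * ((12 * n%:R)^-1 - \sum_(l < L) (12 * (k l)%:R + n%:R)^-1).

Lemma ln_multinomial_le {L n} {k : 'I_L -> nat} (l0 : 'I_L) :
  (forall l, 0 < k l)%N -> (\sum_(l < L) k l)%N = n ->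
  ln (n`!%:R : R) - \sum_(l < L) ln (k l)`!%:R <= multinomial_ln_bound n k.
Proof.
move=> k_gt0 sum_k.
have kl0_le : (k l0 <= n)%N by rewrite -sum_k (bigD1 l0) //= leq_addr.
have n_gt0 : (0 < n)%N := leq_trans (k_gt0 l0) kl0_le.
have sum_kR : \sum_(l < L) (k l)%:R = n%:R :> R by rewrite -natr_sum sum_k.
have lnfact j : ln (j`!%:R : R) = stirling_rem j + (j%:R + 2^-1) * ln j%:R - j%:R.
  by rewrite /stirling_rem; ring.
have sum_lnfact : \sum_(l < L) ln ((k l)`!%:R : R) = \sum_(l < L) stirling_rem (k l)
    + \sum_(l < L) (k l)%:R * ln (k l)%:R + (\sum_(l < L) ln (k l)%:R) / 2 - n%:R.
  have half : \sum_(l < L) ((k l)%:R + 2^-1) * ln ((k l)%:R : R) =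
      \sum_(l < L) (k l)%:R * ln (k l)%:R + (\sum_(l < L) ln (k l)%:R) / 2.
    by rewrite mulr_suml -big_split; apply: eq_bigr => l _ /=; ring.
  by rewrite (eq_bigr _ (fun l _ => lnfact (k l))) sumrB big_split /= sum_kR half addrA.
have entropyE : \sum_(l < L) (k l)%:R * ln ((k l)%:R / n%:R : R) =
    \sum_(l < L) (k l)%:R * ln (k l)%:R - n%:R * ln n%:R.
  have -> : n%:R * ln (n%:R : R) = \sum_(l < L) (k l)%:R * ln n%:R.
    by rewrite -mulr_suml sum_kR.
  rewrite -sumrB; apply: eq_bigr => l _.
  by rewrite ln_div ?posrE ?ltr0n //; ring.
have := stirling_rem_multinomial_le l0 k_gt0 kl0_le.
have := @robbins_correction_le L n%:R (fun l => (k l)%:R) l0.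
have kR_gt0 l : (0 : R) < (k l)%:R by rewrite ltr0n.
rewrite ler1n n_gt0 ler_nat kl0_le => /(_ isT kR_gt0 isT).
rewrite /multinomial_ln_bound lnfact sum_lnfact entropyE; lra.
Qed.

Lemma ln_le_ln_multinomial {L n M} {k : 'I_L -> nat} : (0 < M)%N ->
  (M * \prod_(l < L) (k l)`! <= n`!)%N ->
  ln (M%:R : R) <= ln n`!%:R - \sum_(l < L) ln (k l)`!%:R.
Proof.
move=> M0 card_le; have factR_gt0 j : (0 : R) < j`!%:R by rewrite ltr0n fact_gt0.
have prod_gt0 : (0 : R) < \prod_(l < L) (k l)`!%:R by rewrite prodr_gt0.
rewrite lerBrDr -ln_prod // -lnM ?posrE ?ltr0n // -natr_prod -natrM.
rewrite ler_ln ?posrE ?ltr0n ?muln_gt0 ?M0 ?prodn_gt0 ?fact_gt0 ?ler_nat //.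
by move=> l; exact: fact_gt0.
Qed.

End RealAnalysis.

(** * Constant composition codes *)

Section ConstantCompositionCode.
Context {R : realType} {L n M : nat}.
Context {x : 'I_L -> cplx R} {u : 'I_M -> n.-tuple (cplx R)}.
Hypothesis x_inj : injective x.
Hypothesis u_in_X : forall i (m : 'I_n), exists l, tnth (u i) m = x l.

Let alphabet := map x (enum 'I_L).

Lemma uniq_alphabet : uniq alphabet.
Proof. by rewrite map_inj_uniq ?enum_uniq. Qed.

Lemma codeword_in_alphabet i : all (mem alphabet) (u i).
Proof.
apply/allP => _ /tnthP[m ->]; have [l ->] := u_in_X i m.
exact: map_f (mem_enum _ l).
Qed.

Lemma sum_count_codeword i : (\sum_(l < L) count_mem (x l) (u i))%N = n.
Proof.
rewrite -[RHS](size_tuple (u i)) -(sum_count_mem uniq_alphabet (codeword_in_alphabet i)).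
by rewrite big_map big_enum.
Qed.

Lemma code_card_mul_prod_fact_le i0 : (0 < n)%N -> injective u ->
  constant_composition u ->
  (M * \prod_(l < L) (count_mem (x l) (u i0))`! <= n`!)%N.
Proof.
move=> n0 u_inj hcc.
have := @uniq_perm_eq_size_le _ alphabet (u i0) (map (fun i => val (u i)) (enum 'I_M)).
rewrite size_map size_enum_ord size_tuple big_map big_enum /=; apply.
- exact: uniq_alphabet.
- exact: codeword_in_alphabet.
- by rewrite map_inj_uniq ?enum_uniq // => i j /val_inj /u_inj.
apply/allP => _ /mapP[i _ ->]; apply/allP => a _; apply/eqP.
have := hcc i a; rewrite -(hcc i0 a) /type_of => /(congr1 (fun r => r * n%:R)).
by rewrite !divfK ?pnatr_eq0 -?lt0n // => /eqP; rewrite eqr_nat => /eqP.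
Qed.

End ConstantCompositionCode.

Section ConverseBound.
Context {R : realType}.

(* For [n = 0], [type_of] divides by zero, which yields [0]. *)
Lemma code_type_gt0 {n M} {u : 'I_M -> n.-tuple (cplx R)} {a} :
  0 < code_type u a -> (0 < n)%N /\ (0 < M)%N.
Proof.
rewrite /code_type /type_of; case: n u => [|n] u.
  by rewrite big1 ?mulr0 ?ltxx // => i _; rewrite invr0 mulr0.
by case: M u => [|M] u; rewrite ?big_ord0 ?mulr0 ?ltxx.
Qed.

Lemma rate_le0_of_void_alphabet {n M} {x : 'I_0 -> cplx R}
    {u : 'I_M -> n.-tuple (cplx R)} :
  (forall i (m : 'I_n), exists l, tnth (u i) m = x l) -> rate R n M <= 0.
Proof.
case: n u => [|n] u u_in_X; first by rewrite /rate invr0 mulr0.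
case: M u u_in_X => [|M] u u_in_X; last by have [[]] := u_in_X ord0 ord0.
rewrite /rate /log2 mulr_le0_ge0 ?invr_ge0 //.
by rewrite mulr_le0_ge0 ?ln_le0 ?invr_ge0 ?ln_ge0 ?ler1n.
Qed.

Lemma converse_boundE {L n} {x : 'I_L -> cplx R} {P : cplx R -> R} {k : 'I_L -> nat} :
  (0 < n)%N -> (forall l, 0 < k l)%N -> (forall l, P (x l) = (k l)%:R / n%:R) ->
  entropy2 x P + (n%:R ^+ 2)^-1 * (12^-1 - \sum_(l < L) (12 * P (x l) + 1)^-1)
  + n%:R^-1 * (log2 (Num.sqrt (2 * pi)) -
               \sum_(l < L) log2 (Num.sqrt (2 * pi * P (x l))))
  - log2 n%:R / n%:R * ((L%:R - 1) / 2)
  = multinomial_ln_bound R n k / (n%:R * ln 2).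
Proof.
move=> n0 k_gt0 Pk; have nR_gt0 : (0 : R) < n%:R by rewrite ltr0n.
have kR_gt0 l : (0 : R) < (k l)%:R by rewrite ltr0n.
have ln2_gt0 : 0 < ln (2 : R) by rewrite ln_gt0 // ltr1n.
have pi2_gt0 : 0 < 2 * pi :> R by rewrite mulr_gt0 ?pi_gt0.
have entropyE : entropy2 x P =
    - (\sum_(l < L) (k l)%:R * ln ((k l)%:R / n%:R)) / (n%:R * ln 2).
  rewrite /entropy2 mulNr mulr_suml; congr (- _); apply: eq_bigr => l _.
  by rewrite Pk /log2; field; rewrite !gt_eqF.
have correctionE : \sum_(l < L) (12 * P (x l) + 1)^-1 =
    n%:R * \sum_(l < L) (12 * (k l)%:R + n%:R)^-1.
  rewrite mulr_sumr; apply: eq_bigr => l _; rewrite Pk; field.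
  by rewrite !gt_eqF // addr_gt0 ?mulr_gt0.
have sqrtE l : log2 (Num.sqrt (2 * pi * P (x l))) =
    (ln (2 * pi) + ln (k l)%:R - ln n%:R) / (2 * ln 2).
  rewrite /log2 ln_sqrt; last by rewrite Pk mulr_gt0 ?divr_gt0.
  rewrite Pk lnM ?posrE ?divr_gt0 // ln_div ?posrE //.
  by field; rewrite gt_eqF.
rewrite entropyE correctionE (eq_bigr _ (fun l _ => sqrtE l)) /log2 ln_sqrt //.
rewrite -mulr_suml !big_split /= sumrN !sumr_const card_ord /multinomial_ln_bound.
rewrite -[ln (2 * pi) *+ L]mulr_natl -[ln n%:R *+ L]mulr_natl.
by field; rewrite !gt_eqF.
Qed.

End ConverseBound.

Theorem theorem2 (R : realType) (L n M : nat) (x : 'I_L -> cplx R)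
    (hx : injective x) (sigma k1 k2 eps B delta : R)
    (hsigma : 0 < sigma) (hk1 : 0 < k1) (hk2 : 0 < k2)
    (u : 'I_M -> n.-tuple (cplx R)) (D : 'I_M -> set (n.-tuple (cplx R)))
    (hcode : is_code x u D)
    (hcc : constant_composition u)
    (hpos : forall l : 'I_L, 0 < code_type u (x l))
    (hgood : is_eBd_code sigma k1 k2 eps B delta u D) :
  rate R n M <=
    entropy2 x (code_type u)
    + (n%:R ^+ 2)^-1 * (12^-1 - \sum_(l < L) (12 * code_type u (x l) + 1)^-1)
    + n%:R^-1 * (log2 (Num.sqrt (2 * pi)) -
                 \sum_(l < L) log2 (Num.sqrt (2 * pi * code_type u (x l))))
    - log2 n%:R / n%:R * ((L%:R - 1) / 2).
Proof.
case: hcode => u_in_X u_inj _ _.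
case: L x hx u_in_X hpos => [|L] x hx u_in_X hpos.
  apply: le_trans (rate_le0_of_void_alphabet u_in_X) _.
  have log2_ge0 (a : R) : 1 <= a -> 0 <= log2 a.
    by move=> a1; rewrite /log2 divr_ge0 ?ln_ge0 ?ler1n.
  have sqrt_ge1 : 1 <= Num.sqrt (2 * pi) :> R.
    by rewrite -[leLHS]sqrtr1 ler_sqrt ?mulr_ge0 ?pi_ge0 //; have := pi_ge2 R; lra.
  have logn_ge0 : 0 <= log2 n%:R / n%:R :> R.
    by case: n {u D hcc u_in_X u_inj hgood hpos} => [|n];
      rewrite ?invr0 ?mulr0 // divr_ge0 ?log2_ge0 ?ler1n.
  have ninv_ge0 : 0 <= n%:R^-1 :> R by rewrite invr_ge0.
  have := log2_ge0 _ sqrt_ge1; rewrite /entropy2 !big_ord0 -exprVn.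
  move: (log2 _) (n%:R^-1) logn_ge0 ninv_ge0 => a b; nra.
have [n_gt0 M_gt0] := code_type_gt0 (hpos ord0).
pose i0 := Ordinal M_gt0; pose k l := count_mem (x l) (u i0).
have Pk l : code_type u (x l) = (k l)%:R / n%:R by rewrite -(hcc i0).
have k_gt0 l : (0 < k l)%N by have := hpos l; rewrite Pk pmulr_lgt0 ?invr_gt0 ?ltr0n.
have card_le := code_card_mul_prod_fact_le hx u_in_X i0 n_gt0 u_inj hcc.
rewrite (converse_boundE n_gt0 k_gt0 Pk) /rate /log2 mulrAC -mulrA -invfM.
rewrite ler_pM2r ?invr_gt0 ?mulr_gt0 ?ltr0n ?ln_gt0 ?ltr1n //.
have sum_k := sum_count_codeword hx u_in_X i0.
apply: le_trans _ (ln_multinomial_le R ord0 k_gt0 sum_k).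
exact: (ln_le_ln_multinomial R M_gt0 card_le).
Qed.
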